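(* Let $0<\alpha<1$, $0<\beta\leq 1$, $L=[-1,-\beta]\cup\{\alpha\}$, let $P\subset\mathbb{R}^d$ be an $L$-spherical code, and let $G$ be the graph on vertex set $P$ in which distinct $x,y\in P$ are adjacent iff $\langle x,y\rangle\in[-1,-\beta]$. Let $\varepsilon>0$. Suppose $p_1,\dots,p_n$ is an independent set in $G$, and suppose $p^{(1)},\dots,p^{(m)}\in P$ are distinct points of the form $p^{(i)}=v^{(i)}+u^{(i)}$ with $v^{(i)}\in\operatorname{span}\{p_1,\dots,p_n\}$ and $u^{(i)}$ orthogonal to $\operatorname{span}\{p_1,\dots,p_n\}$, such that $\langle v^{(i)},v^{(j)}\rangle>\alpha+\varepsilon$ for all $i,j$. Then $m\leq 1/\varepsilon+1$.
   Context: For a set $L\subseteq[-1,1]$, an $L$-spherical code in $\mathbb{R}^d$ is a set $P$ of unit vectors such that $\langle x,y\rangle\in L$ for all distinct $x,y\in P$. *)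

From HB Require Import structures.
From mathcomp Require Import all_boot all_order all_algebra.
From mathcomp Require Import reals.
Set Implicit Arguments. Unset Strict Implicit. Unset Printing Implicit Defensive.
Import Order.TTheory GRing.Theory Num.Theory.
Local Open Scope ring_scope.

Definition dot (R : realType) (d : nat) (x y : 'rV[R]_d) : R :=
  \sum_(k < d) x 0 k * y 0 k.

Definition Lset (R : realType) (alpha beta : R) (t : R) : Prop :=
  (-1 <= t /\ t <= - beta) \/ t = alpha.

Definition spherical_code (R : realType) (d : nat) (L : R -> Prop)
  (P : 'rV[R]_d -> Prop) : Prop :=
  (forall x, P x -> dot x x = 1) /\
  (forall x y, P x -> P y -> x <> y -> L (dot x y)).

Definition adjG (R : realType) (d : nat) (beta : R) (x y : 'rV[R]_d) : Prop :=
  x <> y /\ (-1 <= dot x y /\ dot x y <= - beta).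

Definition independent_in (R : realType) (d n : nat) (beta : R)
  (P : 'rV[R]_d -> Prop) (p : 'I_n -> 'rV[R]_d) : Prop :=
  injective p /\ (forall i, P (p i)) /\ (forall i j, ~ adjG beta (p i) (p j)).

Definition in_span (R : realType) (d n : nat) (p : 'I_n -> 'rV[R]_d) (v : 'rV[R]_d) : Prop :=
  exists c : 'I_n -> R, v = \sum_(i < n) c i *: p i.

Definition orth_span (R : realType) (d n : nat) (p : 'I_n -> 'rV[R]_d) (u : 'rV[R]_d) : Prop :=
  forall w, in_span p w -> dot u w = 0.

From HB Require Import structures.
From mathcomp Require Import all_boot all_order all_algebra.
From mathcomp Require Import reals.
From mathcomp Require Import lra.
Set Implicit Arguments. Unset Strict Implicit. Unset Printing Implicit Defensive.
Import Order.TTheory GRing.Theory Num.Theory.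
Local Open Scope ring_scope.

(* Orthogonality splits <q_i, q_j> = <v_i, v_j> + <u_i, u_j>,
   and since every inner product of distinct code points is at most alpha, the
   components u_i satisfy |u_i|^2 < 1 and <u_i, u_j> < -eps for i <> j.  Expanding
   0 <= |u_1 + ... + u_m|^2 then gives (m - 1) eps <= 1. *)

Section InnerProduct.
Context {R : realType} {d : nat}.
Implicit Types x y z : 'rV[R]_d.

Lemma dotC x y : dot x y = dot y x.
Proof. by apply: eq_bigr => k _; rewrite mulrC. Qed.

Lemma dotDl x y z : dot (x + y) z = dot x z + dot y z.
Proof. by rewrite /dot -big_split; apply: eq_bigr => k _; rewrite !mxE mulrDl. Qed.

Lemma dotDr x y z : dot z (x + y) = dot z x + dot z y.
Proof. by rewrite dotC dotDl !(dotC z). Qed.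

Lemma dot0l y : dot 0 y = 0.
Proof. by rewrite /dot big1 // => k _; rewrite mxE mul0r. Qed.

Lemma dot_ge0 x : 0 <= dot x x.
Proof. by apply: sumr_ge0 => k _; rewrite -expr2 sqr_ge0. Qed.

Lemma dot_suml (I : finType) (f : I -> 'rV[R]_d) y :
  dot (\sum_i f i) y = \sum_i dot (f i) y.
Proof. by apply: (big_morph (fun x => dot x y) (fun a b => dotDl a b y) (dot0l y)). Qed.

Lemma dot_sumr (I : finType) (f : I -> 'rV[R]_d) y :
  dot y (\sum_i f i) = \sum_i dot y (f i).
Proof. by rewrite dotC dot_suml; apply: eq_bigr => i _; rewrite dotC. Qed.

Lemma dot_orthD x x' y y' :
  dot x y' = 0 -> dot y x' = 0 -> dot (x + y) (x' + y') = dot x x' + dot y y'.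
Proof. by move=> xy' yx'; rewrite dotDl !dotDr xy' yx' addr0 add0r. Qed.

Lemma sum_dot_ge0 (I : finType) (u : I -> 'rV[R]_d) :
  0 <= \sum_i \sum_j dot (u i) (u j).
Proof.
have := dot_ge0 (\sum_i u i); rewrite dot_suml.
by under eq_bigr do rewrite dot_sumr.
Qed.

Lemma obtuse_family_size (m : nat) (u : 'I_m -> 'rV[R]_d) (a b : R) :
  (forall i, dot (u i) (u i) <= a) ->
  (forall i j, i != j -> dot (u i) (u j) <= - b) ->
  (0 < m)%N -> (m%:R - 1) * b <= a.
Proof.
move=> diag_le offdiag_le m_gt0.
have entry_le i j : dot (u i) (u j) <= (if j == i then a + b else 0) - b.
  case: eqP => [->|/eqP ji]; first by have := diag_le i; lra.
  by rewrite sub0r offdiag_le // eq_sym.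
have row_sum i : \sum_(j < m) ((if j == i then a + b else 0) - b) = a + b - m%:R * b.
  by rewrite big_split /= -big_mkcond big_pred1_eq sumrN sumr_const card_ord mulr_natl.
have : 0 <= \sum_(i < m) (a + b - m%:R * b).
  apply: (le_trans (sum_dot_ge0 u)); apply: ler_sum => i _.
  by rewrite -(row_sum i); apply: ler_sum => j _; apply: entry_le.
by rewrite sumr_const card_ord pmulrn_lge0 //; lra.
Qed.

End InnerProduct.

Lemma Lset_le_alpha (R : realType) (alpha beta t : R) :
  0 <= alpha -> 0 <= beta -> Lset alpha beta t -> t <= alpha.
Proof. by move=> ? ? [[_ ?]|->]; lra. Qed.

Lemma le_inv_add1 (R : realType) (m : nat) (eps : R) :
  0 < eps -> (m%:R - 1) * eps <= 1 -> (m%:R : R) <= 1 / eps + 1.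
Proof. by move=> eps_gt0 bound; rewrite -lerBlDr ler_pdivlMr. Qed.

Theorem lemma5 (R : realType) (d n m : nat) (alpha beta eps : R)
  (P : 'rV[R]_d -> Prop)
  (p : 'I_n -> 'rV[R]_d) (q v u : 'I_m -> 'rV[R]_d) :
  0 < alpha -> alpha < 1 -> 0 < beta -> beta <= 1 ->
  spherical_code (Lset alpha beta) P ->
  0 < eps ->
  independent_in beta P p ->
  injective q ->
  (forall i, P (q i)) ->
  (forall i, q i = v i + u i) ->
  (forall i, in_span p (v i)) ->
  (forall i, orth_span p (u i)) ->
  (forall i j, alpha + eps < dot (v i) (v j)) ->
  (m%:R : R) <= 1 / eps + 1.
Proof.
move=> alpha_gt0 _ beta_gt0 _ [unitP codeL] eps_gt0 _ q_inj Pq qE v_span u_orth vv.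
have u_perp_v i j : dot (u i) (v j) = 0 := u_orth i (v j) (v_span j).
have dot_q i j : dot (q i) (q j) = dot (v i) (v j) + dot (u i) (u j).
  by rewrite !qE dot_orthD // dotC.
case: (posnP m) => [-> | m_gt0]; first by have := divr_gt0 ltr01 eps_gt0; lra.
apply: le_inv_add1 => //; apply: (obtuse_family_size (u := u)) => // [i | i j ij].
  by have := unitP _ (Pq i); have := vv i i; rewrite dot_q; lra.
have qij : q i <> q j by move=> /q_inj /eqP; apply/negP.
have := Lset_le_alpha (ltW alpha_gt0) (ltW beta_gt0) (codeL _ _ (Pq i) (Pq j) qij).
by have := vv i j; rewrite dot_q; lra.
Qed.
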